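(* Let $n\ge 1$, $d\ge 1$ and $R=\mathbb{C}[x_0,\dots,x_n]$. A tuple $(f_{ij}: 0\le i<j\le n)\in R_d^{\binom{n+1}{2}}$ is the tuple of determinantal equations of the eigenscheme of a partially symmetric tensor, i.e. there exist $g_0,\dots,g_n\in R_{d-1}$ with $f_{ij}=x_ig_j-x_jg_i$ for all $0\le i<j\le n$, if and only if $$x_if_{jk}-x_jf_{ik}+x_kf_{ij}=0\quad\text{for every }0\le i<j<k\le n.$$
   Context: A partially symmetric tensor is identified with a tuple $T=(g_0,\dots,g_n)$ of homogeneous polynomials $g_i\in\mathbb{C}[x_0,\dots,x_n]_{d-1}$; the determinantal equations of its eigenscheme $E(T)$ are the $2\times 2$ minors $x_ig_j-x_jg_i$ ($0\le i<j\le n$) of the matrix $\begin{pmatrix} x_0&\dots&x_n\\ g_0&\dots&g_n\end{pmatrix}$. *)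

From HB Require Import structures.
From mathcomp Require Import all_boot all_order all_algebra.
From mathcomp Require Import reals.
From mathcomp Require Import complex.
From mathcomp Require Import mpoly.
Set Implicit Arguments. Unset Strict Implicit. Unset Printing Implicit Defensive.
Import Order.TTheory GRing.Theory Num.Theory.
Local Open Scope ring_scope.

(* The complex numbers C = R[i] for a model R of the real numbers. *)
(* Polynomial ring C[x_0,...,x_n] = {mpoly R[i][n.+1]}; x_i = 'X_i. *)

From HB Require Import structures.
From mathcomp Require Import all_boot all_order all_algebra.
From mathcomp Require Import reals complex mpoly.
From mathcomp Require Import ring.
Set Implicit Arguments. Unset Strict Implicit. Unset Printing Implicit Defensive.
Import Order.TTheory GRing.Theory Num.Theory.
Local Open Scope ring_scope.

(* Extend f antisymmetrically to all pairs (i, j) and view it as a 2-chain F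
   of the Koszul complex on x_0, ..., x_n; the hypothesis says that F is a
   cycle.  Taking the divergence sum_k d/dx_k of the cycle identity
   x_i F_jk - x_j F_ik + x_k F_ij = 0 and using Euler's formula
   sum_k x_k d/dx_k F_ij = d F_ij gives, with G_a := sum_k d/dx_k F_ak,
   x_i G_j - x_j G_i = -(n + d - 1) F_ij,
   so g := -G / (n + d - 1) works since the characteristic is 0. *)

Section PartialDerivatives.
Variables (K : comNzRingType) (n : nat).
Implicit Types (p : {mpoly K[n]}).

Lemma mderivXi (i k : 'I_n) : ('X_i : {mpoly K[n]})^`M(k) = (i == k)%:R.
Proof.
rewrite mderivX mnm1E; case: eqVneq => [->|_]; last by rewrite scale0r.
have -> : (U_(k) - U_(k) = 0)%MM by apply/mnmP=> j; rewrite mnmBE subnn mnm0E.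
by rewrite mpolyX0 scale1r.
Qed.

Lemma sum_mulX_mderivX (m : 'X_{1..n}) :
  \sum_k ('X_k : {mpoly K[n]}) * ('X_[m])^`M(k) = 'X_[m] *+ mdeg m.
Proof.
rewrite mdegE -sumrMnr; apply: eq_bigr => k _.
rewrite mderivX -scalerAr -mpolyXD scaler_nat.
have [->|mk_gt0] := posnP (m k); first by rewrite !mulr0n.
congr (_ *+ _); congr 'X_[_]; apply/mnmP => j.
rewrite mnmDE mnmBE mnm1E; case: eqVneq => [<-|_]; last by rewrite subn0.
by rewrite add1n subn1 prednK.
Qed.

Lemma euler_dhomog p d : p \is d.-homog -> \sum_k 'X_k * p^`M(k) = p *+ d.
Proof.
move=> /dhomogP p_homog; rewrite {1 2}(mpolyE p).
under eq_bigr do rewrite raddf_sum mulr_sumr.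
rewrite exchange_big /= -sumrMnl big_seq [RHS]big_seq; apply: eq_bigr => m m_supp.
under eq_bigr do rewrite mderivZ -scalerAr.
by rewrite -scaler_sumr sum_mulX_mderivX p_homog // scalerMnr.
Qed.

Lemma mderiv_dhomog p d k : p \is d.-homog -> p^`M(k) \is d.-1.-homog.
Proof.
move=> /dhomogP p_homog; apply/dhomogP => m.
rewrite mcoeff_msupp mcoeff_mderiv => coef_neq0.
have : p@_(m + U_(k)) != 0 by apply: contraNneq coef_neq0 => ->; rewrite mul0rn.
by rewrite -mcoeff_msupp => /p_homog <- /=; rewrite mdegD mdeg1 addn1.
Qed.

End PartialDerivatives.

Section AlternatingTernary.
Variables (V : zmodType) (m : nat) (h : 'I_m -> 'I_m -> 'I_m -> V).
Hypotheses (h_swap12 : forall i j k, h j i k = - h i j k)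
           (h_swap23 : forall i j k, h i k j = - h i j k)
           (h_diag12 : forall i k, h i i k = 0)
           (h_diag23 : forall i j, h i j j = 0)
           (h_sorted : forall i j k : 'I_m, (i < j)%N -> (j < k)%N -> h i j k = 0).

Lemma alternating3_eq0 i j k : h i j k = 0.
Proof.
have h_lt12 (a b c : 'I_m) : (a < b)%N -> h a b c = 0.
  move=> lt_ab; case: (ltngtP b c) => [lt_bc|lt_cb|/val_inj <-].
  - exact: h_sorted.
  - rewrite h_swap23; case: (ltngtP a c) => [lt_ac|lt_ca|/val_inj <-].
    + by rewrite h_sorted ?oppr0.
    + by rewrite h_swap12 h_sorted ?opprK.
    + by rewrite h_diag12 oppr0.
  - exact: h_diag23.
case: (ltngtP i j) => [lt_ij|lt_ji|/val_inj <-].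
- exact: h_lt12.
- by rewrite -[h i j k]opprK -h_swap12 h_lt12 ?oppr0.
- exact: h_diag12.
Qed.

End AlternatingTernary.

Section AlternatingExtension.
Variables (V : zmodType) (m : nat) (f : 'I_m -> 'I_m -> V).

Definition alt_ext (i j : 'I_m) : V :=
  if (i < j)%N then f i j else if (j < i)%N then - f j i else 0.

Lemma alt_ext_swap (i j : 'I_m) : alt_ext j i = - alt_ext i j.
Proof. by rewrite /alt_ext; case: ltngtP; rewrite ?opprK ?oppr0. Qed.

Lemma alt_ext_diag (i : 'I_m) : alt_ext i i = 0.
Proof. by rewrite /alt_ext ltnn. Qed.

Lemma alt_ext_lt (i j : 'I_m) : (i < j)%N -> alt_ext i j = f i j.
Proof. by rewrite /alt_ext => ->. Qed.

Lemma alt_ext_rpred (S : zmodClosed V) (i j : 'I_m) :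
  (forall a b : 'I_m, (a < b)%N -> f a b \in S) -> alt_ext i j \in S.
Proof. by move=> f_S; rewrite /alt_ext; case: ltngtP => ?; rewrite ?rpredN ?f_S ?rpred0. Qed.

End AlternatingExtension.

Section KoszulCycles.
Variables (K : comNzRingType) (n : nat).
Implicit Types (F : 'I_n -> 'I_n -> {mpoly K[n]}).

Definition koszul2 F (i j k : 'I_n) : {mpoly K[n]} :=
  'X_i * F j k - 'X_j * F i k + 'X_k * F i j.

Definition mdivergence F (a : 'I_n) : {mpoly K[n]} := \sum_k (F a k)^`M(k).

Definition alternating F := forall i j, F j i = - F i j.

Lemma sum_delta_mul (x : 'I_n -> {mpoly K[n]}) (i : 'I_n) :
  \sum_k (i == k)%:R * x k = x i.
Proof.
rewrite (bigD1 i) //= eqxx mul1r big1 ?addr0 // => k ne_ki.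
by rewrite eq_sym (negbTE ne_ki) mul0r.
Qed.

Lemma alternating_alt_ext (f : 'I_n -> 'I_n -> {mpoly K[n]}) : alternating (alt_ext f).
Proof. exact: alt_ext_swap. Qed.

Lemma koszul2_alt_ext_eq0 (f : 'I_n -> 'I_n -> {mpoly K[n]}) :
  (forall i j k : 'I_n, (i < j)%N -> (j < k)%N -> koszul2 f i j k = 0) ->
  forall i j k, koszul2 (alt_ext f) i j k = 0.
Proof.
move=> f_cycle i j k.
apply: alternating3_eq0 => {i j k} [i j k|i j k|i k|i j|i j k lt_ij lt_jk];
  rewrite /koszul2 ?alt_ext_diag.
- by rewrite (alt_ext_swap f i j); ring.
- by rewrite (alt_ext_swap f j k); ring.
- by ring.
- by rewrite (alt_ext_swap f j i); ring.
- by rewrite !alt_ext_lt ?(ltn_trans lt_ij lt_jk) //; apply: f_cycle.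
Qed.

Lemma mdivergence_koszul2 F d (i j : 'I_n) :
  alternating F -> F i j \is d.-homog ->
  \sum_k (koszul2 F i j k)^`M(k)
    = 'X_i * mdivergence F j - 'X_j * mdivergence F i - F i j *+ 2
      + F i j *+ (n + d).
Proof.
move=> F_alt F_homog; rewrite /koszul2.
under eq_bigr do rewrite mderivD mderivB !mderivM !mderivXi.
rewrite !big_split /= sumrN big_split /= !sum_delta_mul.
rewrite -!mulr_sumr (euler_dhomog F_homog) (F_alt i j).
have -> : \sum_(k < n) (k == k)%:R * F i j = F i j *+ n.
  by rewrite (eq_bigr (fun=> F i j)) ?sumr_const ?card_ord // => k _; rewrite eqxx mul1r.
rewrite /mdivergence mulrnDr; ring.
Qed.

End KoszulCycles.

Section KoszulExactness.
Variables (K : fieldType) (n d : nat).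
Hypothesis nd_neq0 : (n + d)%:R != 0 :> K.
Variable F : 'I_n.+1 -> 'I_n.+1 -> {mpoly K[n.+1]}.
Hypotheses (F_alt : alternating F) (F_homog : forall i j, F i j \is d.+1.-homog)
           (F_cycle : forall i j k, koszul2 F i j k = 0).

Lemma koszul2_cycle_boundary :
  exists g : 'I_n.+1 -> {mpoly K[n.+1]},
    (forall a, g a \is d.-homog) /\
    (forall i j, F i j = 'X_i * g j - 'X_j * g i).
Proof.
have div_eq i j : 'X_i * mdivergence F j - 'X_j * mdivergence F i
                  = - (F i j *+ (n + d)).
  have := mdivergence_koszul2 F_alt (F_homog i j).
  rewrite big1 => [|k _]; last by rewrite F_cycle mderiv0.
  move=> div_sum; apply/eqP; rewrite -subr_eq0 [X in _ == X]div_sum; apply/eqP.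
  rewrite addSn addnS !mulrS; ring.
exists (fun a => - ((n + d)%:R^-1 *: mdivergence F a)); split.
  move=> a; rewrite rpredN rpredZ // rpred_sum // => k _.
  exact: mderiv_dhomog (F_homog a k).
move=> i j; rewrite !mulrN -!scalerAr opprK addrC -scalerBr -opprB div_eq opprK.
by rewrite -scaler_nat scalerA mulVf ?scale1r.
Qed.

End KoszulExactness.

Theorem theorem3p1 (R : realType) (n d : nat) (hn : (1 <= n)%N) (hd : (1 <= d)%N)
  (f : 'I_n.+1 -> 'I_n.+1 -> {mpoly R[i][n.+1]})
  (hf : forall i j : 'I_n.+1, (i < j)%N -> f i j \is d.-homog) :
  (exists g : 'I_n.+1 -> {mpoly R[i][n.+1]},
      (forall i, g i \is d.-1.-homog) /\
      (forall i j : 'I_n.+1, (i < j)%N -> f i j = 'X_i * g j - 'X_j * g i))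
  <->
  (forall i j k : 'I_n.+1, (i < j)%N -> (j < k)%N ->
      'X_i * f j k - 'X_j * f i k + 'X_k * f i j = 0).
Proof.
split=> [[g [_ f_eq]] i j k lt_ij lt_jk|f_cycle].
  by rewrite (f_eq _ _ lt_ij) (f_eq _ _ lt_jk) (f_eq _ _ (ltn_trans lt_ij lt_jk)); ring.
case: d hd hf => // d _ hf.
have F_homog i j : alt_ext f i j \is d.+1.-homog by apply: alt_ext_rpred.
have nd_neq0 : (n + d)%:R != 0 :> R[i] by rewrite pnatr_eq0 addn_eq0 negb_and -lt0n hn.
have [g [g_homog g_eq]] := koszul2_cycle_boundary nd_neq0
  (alternating_alt_ext f) F_homog (koszul2_alt_ext_eq0 f_cycle).
exists g; split=> // i j lt_ij.
by rewrite -g_eq alt_ext_lt.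
Qed.
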